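(* The Tuza constants satisfy $c_7 \le 0.1916$, $c_8 \le 0.1772$, and $c_k \le 0.1667$ for every integer $k$ with $9 \le k \le 17$.
   Context: A hypergraph $H=(V,E)$ consists of a finite vertex set $V$ and a finite collection $E$ of subsets of $V$ (edges). $H$ is $k$-uniform if every edge has exactly $k$ vertices. A transversal of $H$ is a set $T\subseteq V$ meeting every edge; $\tau(H)$ denotes the minimum size of a transversal. For $k\ge 1$, the Tuza constant is $c_k=\sup_{H} \tau(H)/(m+n)$, where the supremum ranges over all $k$-uniform hypergraphs $H$, with $n=|V|$ and $m=|E|$. *)

From HB Require Import structures.
From mathcomp Require Import all_boot all_order all_algebra.
From mathcomp Require Import all_classical all_reals.
Set Implicit Arguments. Unset Strict Implicit. Unset Printing Implicit Defensive.
Import Order.TTheory GRing.Theory Num.Theory.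

(* A hypergraph: vertex set = a finite type V, edges = a finite collection
   (sequence, repetitions allowed) of subsets of V. *)

Definition uniform (V : finType) (k : nat) (E : seq {set V}) : Prop :=
  forall e, e \in E -> #|e| = k.

Definition is_transversal (V : finType) (E : seq {set V}) (T : {set V}) : bool :=
  all (fun e : {set V} => ~~ [disjoint T & e]) E.

(* tau(H): minimum size of a transversal (the default #|V| is only reached
   when no transversal exists, which cannot happen if all edges are nonempty;
   moreover setT is then a transversal, so the min is the true minimum). *)
Definition tau (V : finType) (E : seq {set V}) : nat :=
  \big[minn/#|V|]_(T : {set V} | is_transversal E T) #|T|.

Local Open Scope ring_scope.

Definition tuza_constant (R : realType) (k : nat) : R :=
  sup [set r : R | exists (V : finType) (E : seq {set V}),
        uniform k E /\ r = (tau E)%:R / (size E + #|V|)%:R].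

From Pilot Require Import Defs.
From HB Require Import structures.
From mathcomp Require Import all_classical all_reals.
From mathcomp Require Import all_boot all_order all_algebra.
From mathcomp Require Import zify lra.
Import Order.TTheory GRing.Theory Num.Theory.
Import Defs.

Set Implicit Arguments. Unset Strict Implicit. Unset Printing Implicit Defensive.

(* Greedy argument with a potential.  Give every vertex of degree [d] the weight
   [alpha d] and every edge the weight [w], and repeatedly move a vertex [v] of
   maximum degree [D] into the transversal, deleting it with its [D] edges.  The
   potential drops by [alpha D + D w] for [v] and its edges, plus, for each of
   the at least [D (k - 1)] incidences of another vertex with these edges, a
   degree decrease of a vertex of degree at most [D]; when [alpha] is
   nondecreasing and concave, each such decrease costs at least the last
   increment [alpha D - alpha (D - 1)].  If the total drop is always at least
   [N], then [N tau <= potential <= C (n + m)] whenever [alpha, w <= C].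
   Explicit integer weights give the three bounds, the finitely many
   conditions on them being checked by computation. *)

(* [minn] has no neutral element on [nat], but [bigD1] only needs a
   commutative semigroup law. *)
HB.instance Definition _ := SemiGroup.isComLaw.Build nat minn minnA minnC.

Lemma tau_le_card (V : finType) (E : seq {set V}) (T : {set V}) :
  is_transversal E T -> tau E <= #|T|.
Proof. by move=> HT; rewrite /tau (bigD1 T HT) geq_minl. Qed.

Definition deg (V : finType) (E : seq {set V}) (u : V) : nat :=
  count (fun e : {set V} => u \in e) E.

Definition codeg (V : finType) (E : seq {set V}) (v u : V) : nat :=
  count (fun e : {set V} => (v \in e) && (u \in e)) E.

Definition edges_avoiding (V : finType) (E : seq {set V}) (v : V) : seq {set V} :=
  [seq e : {set V} <- E | v \notin e].

Lemma deg_edges_avoiding (V : finType) (E : seq {set V}) (v u : V) :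
  deg E u = deg (edges_avoiding E v) u + codeg E v u.
Proof.
rewrite /deg /codeg count_filter; elim: E => //= e E ->.
by case: (v \in e); case: (u \in e) => /=; lia.
Qed.

Lemma size_edges_avoiding (V : finType) (E : seq {set V}) (v : V) :
  size E = size (edges_avoiding E v) + deg E v.
Proof. by rewrite size_filter /deg -(count_predC (fun e : {set V} => v \in e)) addnC. Qed.

Lemma is_transversal_setU1 (V : finType) (E : seq {set V}) (v : V) (T : {set V}) :
  is_transversal (edges_avoiding E v) T -> is_transversal E (v |: T).
Proof.
move=> /allP HT; apply/allP => e eE; have [ve | nve] := boolP (v \in e).
  by apply/negP => /disjointFr/(_ (setU11 v T)); rewrite ve.
have eE' : e \in edges_avoiding E v by rewrite mem_filter nve.
by move: (HT e eE'); apply: contra; apply/disjointWl/subsetU1.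
Qed.

Lemma ler_nat_ratio (F : numFieldType) (a b c d : nat) :
  0 < d -> a * d <= c * b -> (a%:R / b%:R <= c%:R / d%:R :> F)%R.
Proof.
move=> d_gt0 le_ad_cb; have [->|b_gt0] := posnP b.
  by rewrite invr0 mulr0 divr_ge0 ?ler0n.
by rewrite ler_pdivrMr ?ltr0n // mulrAC ler_pdivlMr ?ltr0n // -!natrM ler_nat.
Qed.

Section GreedyPotential.

Variables (alpha : nat -> nat) (k0 N w : nat).
Hypothesis alpha_mono : forall j, alpha j <= alpha j.+1.
Hypothesis alpha_concave :
  forall j D, 0 < j <= D -> alpha j.-1 + alpha D <= alpha j + alpha D.-1.

Lemma alpha_sub_incr_le (D m d : nat) :
  m <= d <= D -> alpha (d - m) + m * (alpha D - alpha D.-1) <= alpha d.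
Proof.
elim: m => [|m IH] /andP[ltmd leDd]; first by rewrite subn0 addn0.
have IHd := IH (introT andP (conj (ltnW ltmd) leDd)).
have := @alpha_concave (d - m) D; rewrite -subnS subn_gt0 ltmd leq_subLR.
have : alpha D.-1 <= alpha D by case: (D) => //= D'; exact: alpha_mono.
rewrite mulSn; lia.
Qed.

Definition edges_in (V : finType) (U : {set V}) (E : seq {set V}) : Prop :=
  forall e, e \in E -> e \subset U /\ k0 <= #|e|.

Definition potential (V : finType) (U : {set V}) (E : seq {set V}) : nat :=
  \sum_(u in U) alpha (deg E u) + size E * w.

Lemma deg_mul_le_sum_codeg (V : finType) (U : {set V}) (E : seq {set V}) (v : V) :
  edges_in U E -> deg E v * k0.-1 <= \sum_(u in U :\ v) codeg E v u.
Proof.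
elim: E => [|e E IH] HE; first by rewrite mul0n.
rewrite /deg /codeg /=.
rewrite (eq_bigr (fun u => ((v \in e) && (u \in e) : nat) + codeg E v u)) //.
rewrite big_split /= mulnDl.
apply: leq_add; last by apply: IH => f fE; apply: HE; rewrite in_cons fE orbT.
have [eU ke] := HE e (mem_head _ _).
case: (boolP (v \in e)) => //= ve.
have -> : \sum_(u in U :\ v) ((u \in e) : nat) = #|(U :\ v) :&: e|.
  rewrite -sum1_card big_mkcond [RHS]big_mkcond; apply: eq_bigr => u _.
  by rewrite in_setI; case: (u \in U :\ v).
rewrite setIC setIDA (setIidPl eU) mul1n.
by have := cardsD1 v e; rewrite ve; lia.
Qed.

Lemma sum_alpha_deg_edges_avoiding (V : finType) (U : {set V}) (E : seq {set V}) (v : V) :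
  (forall u, u \in U -> deg E u <= deg E v) ->
  \sum_(u in U :\ v) alpha (deg (edges_avoiding E v) u)
    + (alpha (deg E v) - alpha (deg E v).-1) * \sum_(u in U :\ v) codeg E v u
  <= \sum_(u in U :\ v) alpha (deg E u).
Proof.
move=> vmax; rewrite big_distrr -big_split leq_sum // => u /setD1P[_ uU] /=.
have := @alpha_sub_incr_le (deg E v) (codeg E v u) (deg E u).
rewrite vmax // andbT {1 2}(deg_edges_avoiding E v u) addnK leq_addl mulnC.
by apply.
Qed.

Hypothesis step_gain :
  forall D, 0 < D -> N <= alpha D + D * w + D * k0.-1 * (alpha D - alpha D.-1).

Lemma potential_edges_avoiding (V : finType) (U : {set V}) (E : seq {set V}) (v : V) :
  edges_in U E -> v \in U -> (forall u, u \in U -> deg E u <= deg E v) -> 0 < deg E v ->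
  N + potential (U :\ v) (edges_avoiding E v) <= potential U E.
Proof.
move=> HE vU vmax Dgt0; rewrite /potential (big_setD1 v vU) /= (size_edges_avoiding E v).
have := sum_alpha_deg_edges_avoiding vmax.
have := leq_mul (leqnn (alpha (deg E v) - alpha (deg E v).-1))
  (deg_mul_le_sum_codeg v HE).
have := step_gain Dgt0; rewrite mulnDl [_ * (deg E v * _)]mulnC.
lia.
Qed.

Hypothesis k0_gt0 : 0 < k0.

Lemma greedy_transversal (V : finType) (U : {set V}) (E : seq {set V}) :
  edges_in U E -> exists2 T : {set V}, is_transversal E T & N * #|T| <= potential U E.
Proof.
have [n] := ubnP #|U|; elim: n U E => // n IH U E ltUn HE.
case: E => [|e0 E0] in HE *; first by exists set0; rewrite ?cards0 ?muln0.
move: (e0 :: E0) (mem_head e0 E0) HE => E e0E HE.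
have [e0U ke0] := HE e0 e0E.
have [x xe0] : exists x, x \in e0 by apply/card_gt0P; exact: leq_trans k0_gt0 ke0.
have xU := subsetP e0U x xe0.
case: (arg_maxnP (deg E) xU) => v vU vmax; have {}vU : v \in U := vU.
have Dgt0 : 0 < deg E v.
  by apply: leq_trans (vmax x xU); rewrite -has_count; apply/hasP; exists e0.
have HE' : edges_in (U :\ v) (edges_avoiding E v).
  move=> e; rewrite mem_filter => /andP[ve eE]; have [eU ke] := HE e eE.
  by rewrite subsetD1 eU ve.
have ltU'n : #|U :\ v| < n by move: ltUn; rewrite (cardsD1 v U) vU.
have [T HT leT] := IH _ _ ltU'n HE'.
exists (v |: T); first exact: is_transversal_setU1.
have := potential_edges_avoiding HE vU vmax Dgt0.
have /(leq_mul (leqnn N)) : #|v |: T| <= #|T|.+1 by rewrite cardsU1; case: (v \notin T).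
rewrite mulnS; lia.
Qed.

Variable C : nat.
Hypotheses (alpha_le : forall d, alpha d <= C) (w_le : w <= C) (N_gt0 : 0 < N).

Lemma potential_le (V : finType) (E : seq {set V}) :
  potential [set: V] E <= C * (size E + #|V|).
Proof.
rewrite /potential mulnDr addnC leq_add //.
  by rewrite [C * _]mulnC leq_mul2l w_le orbT.
apply: (@leq_trans (\sum_(u in [set: V]) C)); first exact: leq_sum.
by rewrite sum_nat_const cardsT mulnC.
Qed.

Lemma tuza_constant_le (R : realType) (k : nat) :
  k0 <= k -> (tuza_constant R k <= C%:R / N%:R)%R.
Proof.
move=> le_k0k; apply: ge_sup; first by eexists; exists void, [::].
move=> _ [V [E [unifE ->]]].
have HE : edges_in [set: V] E by move=> e /unifE ->; rewrite subsetT.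
have [T /tau_le_card le_tau le_T] := greedy_transversal HE.
apply: ler_nat_ratio => //; rewrite mulnC.
exact: leq_trans (leq_mul (leqnn N) le_tau) (leq_trans le_T (potential_le E)).
Qed.

End GreedyPotential.

Section SequenceCertificate.

Variables (k0 N w c : nat) (s : seq nat).
Local Notation alpha := (nth c s).

(* [alpha] is constant equal to [c] beyond [size s], so the last conjunct
   covers the gain condition for all larger degrees. *)
Definition potential_certificate : bool :=
  [&& all (fun j => alpha j <= alpha j.+1) (iota 0 (size s)),
      all (fun D => all (fun j => alpha j.-1 + alpha D <= alpha j + alpha D.-1)
                        (iota 1 D)) (iota 1 (size s)),
      all (fun D => N <= alpha D + D * w + D * k0.-1 * (alpha D - alpha D.-1))
          (iota 1 (size s))
    & N <= c + (size s).+1 * w].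

Hypothesis cert : potential_certificate.

Let alpha_tail d : size s <= d -> alpha d = c. Proof. exact: nth_default. Qed.

Lemma nth_certificate_mono j : alpha j <= alpha j.+1.
Proof.
case/and4P: cert => /allP mono _ _ _; have [lt_js | le_sj] := ltnP j (size s).
  by apply: mono; rewrite mem_iota.
by rewrite !alpha_tail // ltnW.
Qed.

Lemma nth_certificate_concave j D :
  0 < j <= D -> alpha j.-1 + alpha D <= alpha j + alpha D.-1.
Proof.
case/and4P: cert => _ /allP conc _ _ /andP[j_gt0 le_jD].
have [le_Ds | lt_sD] := leqP D (size s).
  by apply: (allP (conc D _)); rewrite mem_iota; lia.
have sD' : size s <= D.-1 by rewrite -ltnS prednK // (leq_trans j_gt0).
rewrite (alpha_tail sD') (alpha_tail (ltnW lt_sD)) leq_add2r.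
by have := nth_certificate_mono j.-1; rewrite prednK.
Qed.

Lemma nth_certificate_gain D :
  0 < D -> N <= alpha D + D * w + D * k0.-1 * (alpha D - alpha D.-1).
Proof.
case/and4P: cert => _ _ /allP gain le_N D_gt0.
have [le_Ds | lt_sD] := leqP D (size s).
  by apply: gain; rewrite mem_iota; lia.
have sD' : size s <= D.-1 by rewrite -ltnS prednK.
rewrite (alpha_tail sD') (alpha_tail (ltnW lt_sD)) subnn muln0 addn0.
by apply: leq_trans le_N _; rewrite leq_add2l leq_mul2r lt_sD orbT.
Qed.

End SequenceCertificate.

Lemma tuza_constant_le_certificate (R : realType) (k k0 N w C c : nat) (s : seq nat) :
  potential_certificate k0 N w c s -> 0 < k0 <= k -> 0 < N ->
  all (fun x => x <= C) [:: w, c & s] -> (tuza_constant R k <= C%:R / N%:R)%R.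
Proof.
move=> cert /andP[k0_gt0 le_k0k] N_gt0 /and3P[le_wC le_cC /allP le_sC].
have alpha_le d : nth c s d <= C.
  have [lt_ds | le_sd] := ltnP d (size s); last by rewrite nth_default.
  by apply/le_sC/mem_nth.
exact: (tuza_constant_le (nth_certificate_mono cert) (nth_certificate_concave cert)
  (nth_certificate_gain cert) k0_gt0 alpha_le le_wC N_gt0 R le_k0k).
Qed.

Local Open Scope ring_scope.

Theorem theorem1 (R : realType) :
  tuza_constant R 7 <= 1916%:R / 10000%:R /\
  tuza_constant R 8 <= 1772%:R / 10000%:R /\
  (forall k : nat, (9 <= k <= 17)%N -> tuza_constant R k <= 1667%:R / 10000%:R).
Proof.
split; last split.
- apply: le_trans (@tuza_constant_le_certificate R 7 7 100 19 19 19
    [:: 0; 12; 16; 18] _ _ _ _) _; by [|lra].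
- apply: le_trans (@tuza_constant_le_certificate R 8 8 200 35 35 33
    [:: 0; 21; 29; 32] _ _ _ _) _; by [|lra].
- move=> k /andP[le9k _].
  apply: le_trans (@tuza_constant_le_certificate R k 9 200 33 33 32
    [:: 0; 19; 26; 29; 31] _ _ _ _) _; by [|lra].
Qed.
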